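(* Let $C\subseteq\{0,1\}^m$ be a code, let $C'\subseteq C$ with $\mathrm{CL}(C')=\ell$, and let $T=\mathrm{Supp}(C')$. Then $\mathrm{CL}(C|_{\bar T})\le \mathrm{CL}(C)-\ell$.
   Context: For $S\subseteq[m]$, $C|_S=\{c|_S : c\in C\}\subseteq\{0,1\}^S$, and $\bar T=[m]\setminus T$. $\mathrm{Supp}(C')=\{i\in[m] : \exists c\in C',\ c_i\neq 0\}$. A chain of length $\ell$ in a code $D\subseteq\{0,1\}^A$ is a pair of injective maps $a:[\ell]\to A$ and $c:[\ell]\to D$ such that $c(i)_{a(i)}=1$ for all $i$, and $c(i)_{a(j)}=0$ for all $1\le i<j\le\ell$; the chain length $\mathrm{CL}(D)$ is the maximum length of a chain in $D$ ($0$ if none exists). *)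

From mathcomp Require Import all_boot.
Set Implicit Arguments. Unset Strict Implicit. Unset Printing Implicit Defensive.

Definition restrict (I : finType) (S : {set I}) (C : {set {ffun I -> bool}})
  : {set {ffun {x : I | x \in S} -> bool}} :=
  [set [ffun x : {x : I | x \in S} => c (val x)] | c : {ffun I -> bool} in C].

Definition Supp (I : finType) (C' : {set {ffun I -> bool}}) : {set I} :=
  [set i | [exists c in C', c i]].

Definition has_chain (A : finType) (D : {set {ffun A -> bool}}) (l : nat) : bool :=
  [exists a : {ffun 'I_l -> A}, exists c : {ffun 'I_l -> {ffun A -> bool}},
     [&& injectiveb a, injectiveb c,
         [forall i : 'I_l, c i \in D],
         [forall i : 'I_l, c i (a i)] &
         [forall i : 'I_l, forall j : 'I_l, (i < j)%N ==> ~~ c i (a j)]]].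

(* Chain length: maximum length of a chain (lengths are bounded by #|A|
   since a is injective; the empty chain always exists). *)
Definition CL (A : finType) (D : {set {ffun A -> bool}}) : nat :=
  \max_(l < #|A|.+1 | has_chain D l) l.

From mathcomp Require Import all_boot.
Set Implicit Arguments. Unset Strict Implicit. Unset Printing Implicit Defensive.

(* A chain of C' followed by a chain of C|_(~T) is a chain of C: the words of
   C' vanish off T = Supp C', in particular at every position of the second
   chain, and each word of C|_(~T) lifts to a word of C with the same values
   on ~T. *)

Section Chains.
Variable A : finType.
Implicit Types (D : {set {ffun A -> bool}}) (a : nat -> A) (c : nat -> {ffun A -> bool}).

(* [has_chain] with the positions and words indexed by [nat] rather than by
   ['I_n]; injectivity of [a] and [c] is then implied by the other clauses. *)
Definition is_chain D n a c :=
  [/\ forall i, i < n -> c i \in D,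
      forall i, i < n -> c i (a i) &
      forall i j, i < j -> j < n -> ~~ c i (a j)].

Lemma is_chain_has_chain D n a c : is_chain D n a c -> has_chain D n.
Proof.
case=> cD caa cNa; apply/existsP; exists [ffun i : 'I_n => a i].
apply/existsP; exists [ffun i : 'I_n => c i].
have cross_eq (i j : 'I_n) : c i (a j) -> c j (a i) -> i = j.
  move=> cij cji; apply/val_inj; case: (ltngtP i j) => // [ij | ji].
  - by move: (cNa _ _ ij (ltn_ord j)); rewrite cij.
  - by move: (cNa _ _ ji (ltn_ord i)); rewrite cji.
apply/and5P; split.
- by apply/injectiveP => i j; rewrite !ffunE => aij; apply: cross_eq; rewrite (aij, =^~ aij) caa.
- by apply/injectiveP => i j; rewrite !ffunE => cij; apply: cross_eq; rewrite (cij, =^~ cij) caa.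
- by apply/forallP => i; rewrite ffunE cD.
- by apply/forallP => i; rewrite !ffunE caa.
- apply/forallP => i; apply/forallP => j; apply/implyP => ij.
  by rewrite !ffunE cNa.
Qed.

Lemma has_chain_is_chain D n (x0 : A) :
  has_chain D n -> exists a c, is_chain D n a c.
Proof.
case/existsP=> fa /existsP [fc /and5P [_ _ /forallP cD /forallP caa /forallP cNa]].
exists (fun i => if insub i is Some o then fa o else x0).
exists (fun i => if insub i is Some o then fc o else [ffun=> false]).
split=> [i ilt | i ilt | i j ij jlt]; first by rewrite (insubT (gtn n) ilt) cD.
  by rewrite (insubT (gtn n) ilt) caa.
have ilt := ltn_trans ij jlt; rewrite (insubT (gtn n) ilt) (insubT (gtn n) jlt).
by move/forallP: (cNa (Ordinal ilt)) => /(_ (Ordinal jlt)) /implyP; apply.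
Qed.

Lemma has_chain0 D : has_chain D 0.
Proof.
apply/existsP; exists (ffun0 (card_ord 0)); apply/existsP; exists (ffun0 (card_ord 0)).
by apply/and5P; split; try (apply/injectiveP; by case); apply/forallP; case.
Qed.

Lemma has_chain_subset D1 D2 n : D1 \subset D2 -> has_chain D1 n -> has_chain D2 n.
Proof.
move=> sD12 /existsP [fa /existsP [fc /and5P [ia ic /forallP cD caa cNa]]].
apply/existsP; exists fa; apply/existsP; exists fc; rewrite ia ic caa cNa !andbT.
by apply/forallP => i; apply: (subsetP sD12).
Qed.

Lemma has_chain_CL D : has_chain D (CL D).
Proof.
rewrite /CL (bigmax_eq_arg (ord0 : 'I_#|A|.+1)) ?has_chain0 //.
by case: arg_maxnP => //; apply: has_chain0.
Qed.

Lemma leq_CL D n : has_chain D n -> n <= CL D.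
Proof.
move=> chDn; have ltn_card : n < #|A|.+1.
  case/existsP: chDn => fa /existsP [_ /and5P [/injectiveP ia _ _ _ _]].
  by move: (leq_card _ ia); rewrite card_ord.
by rewrite /CL (@leq_bigmax_cond _ _ _ (Ordinal ltn_card)).
Qed.

Lemma CL_subset D1 D2 : D1 \subset D2 -> CL D1 <= CL D2.
Proof. by move=> sD12; apply/leq_CL/(has_chain_subset sD12)/has_chain_CL. Qed.

Lemma is_chain_cat D l k a1 c1 a2 c2 :
  is_chain D l a1 c1 -> is_chain D k a2 c2 ->
  (forall i j, i < l -> j < k -> ~~ c1 i (a2 j)) ->
  is_chain D (l + k) (fun t => if t < l then a1 t else a2 (t - l))
                     (fun t => if t < l then c1 t else c2 (t - l)).
Proof.
case=> c1D ca1 cNa1 [c2D ca2 cNa2] c1Na2.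
have sub_lt t : ~~ (t < l) -> t < l + k -> t - l < k.
  by rewrite -leqNgt => lt ltk; rewrite ltn_subLR.
split=> [t tlt | t tlt | i j ij jlt].
- by case: ifPn => [/c1D | /sub_lt/(_ tlt)/c2D].
- by case: ifPn => [/ca1 | /sub_lt/(_ tlt)/ca2].
case: (ltnP j l) => [jl | lj]; first by rewrite (ltn_trans ij jl) cNa1.
case: ifPn => [il | Nil]; first by rewrite c1Na2 // ltn_subLR.
apply: cNa2; last by rewrite ltn_subLR.
by rewrite ltn_sub2rE // leqNgt.
Qed.

End Chains.

Lemma is_chain_restrict (I : finType) (S : {set I}) (C : {set {ffun I -> bool}})
    k a c :
  is_chain (restrict S C) k a c -> exists d, is_chain C k (fun i => val (a i)) d.
Proof.
case=> cR ca cNa.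
pose d i := odflt [ffun=> false]
  [pick e in C | [ffun x : {x : I | x \in S} => e (val x)] == c i].
have dP i : i < k -> d i \in C /\ forall x, d i (val x) = c i x.
  move=> ilt; rewrite /d; case: pickP => /= [e /andP [eC /eqP <-] | noe].
    by split=> // x; rewrite ffunE.
  by case/imsetP: (cR i ilt) => e eC cie; move: (noe e); rewrite eC cie eqxx.
exists d; split=> [i ilt | i ilt | i j ij jlt].
- by case: (dP i ilt).
- by case: (dP i ilt) => _ ->; apply: ca.
- by case: (dP i (ltn_trans ij jlt)) => _ ->; apply: cNa.
Qed.

Lemma notin_Supp (I : finType) (C' : {set {ffun I -> bool}}) c x :
  c \in C' -> x \notin Supp C' -> ~~ c x.
Proof.
move=> cC'; rewrite inE; apply: contra => cx.
by apply/existsP; exists c; rewrite cC' cx.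
Qed.

Lemma CL_add_restrict_Supp (I : finType) (C C' : {set {ffun I -> bool}}) :
  C' \subset C -> CL C' + CL (restrict (~: Supp C') C) <= CL C.
Proof.
move=> sC'C; set R := restrict (~: Supp C') C.
have [-> | kpos] := posnP (CL R); first by rewrite addn0 CL_subset.
have chR := has_chain_CL R.
(* The index type may be empty; a nonempty chain of R supplies the default
   value needed to index chains by [nat]. *)
have [x0 _] : exists x0 : {x : I | x \in ~: Supp C'}, true.
  by case/existsP: (chR) => fa _; exists (fa (Ordinal kpos)).
have [a2 [c2 /is_chain_restrict [d2 ch2]]] := has_chain_is_chain x0 chR.
have [a1 [c1 ch1]] := has_chain_is_chain (val x0) (has_chain_CL C').
have ch1C : is_chain C (CL C') a1 c1.
  by case: ch1 => c1C' *; split=> // i /c1C'/(subsetP sC'C).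
apply/leq_CL/(is_chain_has_chain (is_chain_cat ch1C ch2 _)) => i j ilt _.
case: ch1 => c1C' _ _; apply: notin_Supp (c1C' i ilt) _.
by rewrite -in_setC (valP (a2 j)).
Qed.

Theorem mainTheorem5 (m : nat) (C C' : {set {ffun 'I_m -> bool}}) (l : nat) :
  C' \subset C -> CL C' = l ->
  (CL (restrict (~: Supp C') C) <= CL C - l)%N.
Proof.
move=> sC'C <-; have le_sum := CL_add_restrict_Supp sC'C.
by rewrite leq_subRL // (leq_trans (leq_addr _ _) le_sum).
Qed.
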